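(* Let $x,y$ be non-commuting indeterminates and $C=xyx^{-1}y^{-1}$. Let $(R_n)_{n\in\mathbb Z}$ satisfy $$R_{2n}CR_{2n-2}=1+R_{2n-1},\qquad R_{2n+1}CR_{2n-1}=1+R_{2n}^4\qquad(n\in\mathbb Z),$$ with $R_0=yxy^{-1}$ and $R_1=y$, and set $u_n=R_{2n}$. Let $$y_1=(1+y)x^{-1}yx^{-1}y^{-1},$$ $$y_2=\big(x^2+(1+y)x^{-2}(1+y)\big)y^{-1}x^{-1}yx^{-1}y^{-1},$$ $$y_3=\big(x^3+(1+y)x^{-1}\big)x^{-1}y^{-1}.$$ Then for every $n\ge0$, $u_nu_0^{-1}$ equals the sum over all Motzkin paths of height at most $1$ from $(0,0)$ to $(n,0)$ of their weights. Such a path is a sequence of points in $\mathbb Z\times\{0,1\}$ in which each step is $(a,h)\to(a+1,h)$ (horizontal) or $(a,h)\to(a+1,1-h)$ (up or down). The weight of a path is the product, in the order of the steps, of: - $y_1$ for each horizontal step at height $0$; - $1$ for each up step; - $y_2$ for each down step; - $y_3$ for each horizontal step at height $1$.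
   Context: Work in the free skew field (non-commutative rational functions) over $\mathbb C$ generated by $x,y$. *)

From HB Require Import structures.
From mathcomp Require Import all_boot all_order all_algebra.
From mathcomp Require Import complex reals.
Set Implicit Arguments. Unset Strict Implicit. Unset Printing Implicit Defensive.
Import Order.TTheory GRing.Theory Num.Theory.
Local Open Scope ring_scope.

Notation Cplx R := (complex (R : realType)).

Definition is_division_ring (D : unitRingType) : Prop :=
  forall z : D, z != 0 -> z \is a GRing.unit.

Section Weights.
Variables (D : unitRingType) (x y : D).

Definition commC : D := x * y * x^-1 * y^-1.

Definition wy1 : D := (1 + y) * x^-1 * y * x^-1 * y^-1.
Definition wy2 : D :=
  (x ^+ 2 + (1 + y) * x^-2 * (1 + y)) * y^-1 * x^-1 * y * x^-1 * y^-1.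
Definition wy3 : D := (x ^+ 3 + (1 + y) * x^-1) * x^-1 * y^-1.

(* Heights: false = 0, true = 1.  Weight of a step from height a to height b. *)
Definition step_weight (a b : bool) : D :=
  match a, b with
  | false, false => wy1
  | false, true  => 1
  | true, false  => wy2
  | true, true   => wy3
  end.

(* A Motzkin path of height <= 1 from (0,0) to (n,0) is encoded by its
   sequence of heights h : 'I_(n+1) -> {0,1} with h 0 = h n = 0. *)
Definition motzkin1 (n : nat) (h : {ffun 'I_n.+1 -> bool}) : bool :=
  ~~ h ord0 && ~~ h ord_max.

Definition path_weight (n : nat) (h : {ffun 'I_n.+1 -> bool}) : D :=
  \prod_(i < n) step_weight (h (inord i)) (h (inord i.+1)).

Definition motzkin1_sum (n : nat) : D :=
  \sum_(h : {ffun 'I_n.+1 -> bool} | motzkin1 h) path_weight h.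

End Weights.

(* Write u_n = R_{2n} and s_n = R_{2n-1}.  Consecutive terms skew-commute,
   s_{n+1} C u_n = u_n s_{n+1} and u_{n+1} C s_{n+1} = s_{n+1} u_{n+1}, by
   induction: each defining relation writes a C b as 1 + c with c commuting with
   the next term.  Given these, Phi_n = u_{n+1}^2 s_{n+1}^-1 + s_{n+1}^-1 u_n^2
   is conserved, since u_{n+1} Phi_n and u_{n+1} Phi_{n+1} both equal
   u_{n+2} C + u_n; so u_{n+2} C = u_{n+1} Phi_0 - u_n.  Splitting off the last
   step of a path gives a 2x2 transfer recursion for the path sums by final
   height, and three identities between y_1, y_2, y_3, C and Phi_0 show that it
   reproduces this linear recurrence, with the same initial values. *)

From HB Require Import structures.
From mathcomp Require Import all_boot all_order all_algebra.
From mathcomp Require Import complex reals.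
From mathcomp Require Import zify.
Import Order.TTheory GRing.Theory Num.Theory.
Set Implicit Arguments. Unset Strict Implicit. Unset Printing Implicit Defensive.
Local Open Scope ring_scope.

Ltac move_front a :=
  repeat (first [ rewrite [in RHS](addrCA _ a) | rewrite [in RHS](addrC _ a) ]).
Ltac addr_perm_rec :=
  lazymatch goal with
  | |- ?a + ?l = _ => move_front a; congr (_ + _); addr_perm_rec
  | |- _ => reflexivity
  end.
(* Closes an equation between two sums that differ by a permutation of the summands. *)
Ltac addr_perm := rewrite -?addrA; addr_perm_rec.

Lemma skew_comm_shift (D : unitRingType) (K a b c P : D) :
  a \is a GRing.unit -> K \is a GRing.unit ->
  b * K * a = a * b -> c * K * a = P -> P * b = b * P -> c * K * b = b * c.
Proof.
move=> ha hK hba hca hPb.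
have ec : c = P / a / K by rewrite -hca !mulrK.
have e : a^-1 * b * K = b / a.
  have -> : a^-1 * b * K = a^-1 * (b * K * a) / a by rewrite !mulrA mulrK.
  by rewrite hba mulKr.
rewrite ec mulrVK // !mulrA -hPb -[in RHS](mulrA P) -e !mulrA mulrK //.
Qed.

Section ConservedQuantity.
Variables (D : unitRingType) (K u0 u1 u2 s1 s2 : D).
Hypotheses (hK : K \is a GRing.unit) (hu1 : u1 \is a GRing.unit)
  (hs1 : s1 \is a GRing.unit) (hs2 : s2 \is a GRing.unit).
Hypotheses (rec_u1 : u1 * K * u0 = 1 + s1) (rec_s2 : s2 * K * s1 = 1 + u1 ^+ 4)
  (rec_u2 : u2 * K * u1 = 1 + s2).

Lemma conserved_left :
  u1 * K * s1 = s1 * u1 ->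
  u1 * (u1 ^+ 2 / s1 + s1^-1 * u0 ^+ 2) = u2 * K + u0.
Proof.
move=> comm11.
have eu2 : u2 * K = (1 + s2) / u1 by rewrite -rec_u2 mulrK.
have es2 : s2 = (1 + u1 ^+ 4) / s1 / K by rewrite -rec_s2 !mulrK.
have inv11 : s1^-1 / K / u1 = u1^-1 / s1.
  have : (u1 * K * s1)^-1 = (s1 * u1)^-1 by rewrite comm11.
  by rewrite invrM ?unitrMl // invrM // invrM // mulrA.
have u1_s1 : u1 / s1 = s1^-1 * u1 * K.
  have -> : s1^-1 * u1 * K = s1^-1 * (u1 * K * s1) / s1 by rewrite !mulrA mulrK.
  by rewrite comm11 mulrA mulVr // mul1r.
have s1_u0 : s1^-1 * u0 = u1^-1 / s1 * (1 + s1).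
  have -> : u0 = K^-1 / u1 * (1 + s1).
    by rewrite -rec_u1 !mulrA mulrVK // mulVr // mul1r.
  by rewrite !mulrA inv11.
have u1Ku0 : s1^-1 * u1 * K * u0 = s1^-1 * (1 + s1) by rewrite -rec_u1 !mulrA.
have inv_assoc : (1 + u1 ^+ 4) / s1 / K / u1 = (1 + u1 ^+ 4) * (u1^-1 / s1).
  by rewrite -inv11 !mulrA.
rewrite mulrDr mulrA -exprS mulrA u1_s1 expr2 mulrA u1Ku0 eu2 es2.
rewrite mulrDr mulr1 mulVr // mulrDl mul1r s1_u0 mulrDr mulr1 mulrVK //.
rewrite mulrDl mul1r inv_assoc mulrDl mul1r (exprSr u1 3) !mulrA mulrK //.
by addr_perm.
Qed.

Lemma conserved_right :
  u2 * K * s2 = s2 * u2 -> s2 * K * u1 = u1 * s2 ->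
  u1 * (u2 ^+ 2 / s2 + s2^-1 * u1 ^+ 2) = u2 * K + u0.
Proof.
move=> comm22 comm21.
have eu0 : u0 = K^-1 / u1 * (1 + s1).
  by rewrite -rec_u1 !mulrA mulrVK // mulVr // mul1r.
have es1 : s1 = K^-1 / s2 * (1 + u1 ^+ 4).
  by rewrite -rec_s2 !mulrA mulrVK // mulVr // mul1r.
have inv21 : u1^-1 / K / s2 = s2^-1 / u1.
  have : (s2 * K * u1)^-1 = (u1 * s2)^-1 by rewrite comm21.
  by rewrite invrM ?unitrMl // invrM // invrM // mulrA.
have f1 : u1 * u2 * K = 1 + s2 * K.
  apply: (mulIr hu1).
  by rewrite -!mulrA (mulrA u2) rec_u2 mulrDl mulrDr mul1r mulr1 -(mulrA s2)
    (mulrA s2) comm21.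
have f2 : u2 / s2 = s2^-1 * u2 * K.
  have -> : s2^-1 * u2 * K = s2^-1 * (u2 * K * s2) / s2 by rewrite !mulrA mulrK.
  by rewrite comm22 mulrA mulVr // mul1r.
have f3 : u1 / s2 = K^-1 / s2 * u1.
  have -> : K^-1 / s2 * u1 = K^-1 / s2 * (u1 * s2) / s2 by rewrite !mulrA mulrK.
  by rewrite -comm21 !mulrA mulrVK // mulVr // mul1r.
have f4 : u2 * K = (1 + s2) / u1 by rewrite -rec_u2 mulrK.
have g0 : u1 * u2 / s2 = K^-1 / s2 * (1 + s2 * K).
  by rewrite -f1 -(mulrA u1) f2 !mulrA f3.
have g1 : u1 * (u2 ^+ 2 / s2) = K^-1 / s2 / u1 + K^-1 / u1 + u2 * K.
  rewrite expr2 -(mulrA u2) f2 !mulrA g0 mulrDr mulr1 mulrA mulrVK // mulVr //.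
  rewrite mulrDl mulrDl !mul1r -(mulrA _ u2 K) f4 mulrDl mul1r mulrDr.
  by rewrite (mulrA _ s2) mulrVK.
have e2 : K^-1 / u1 * (K^-1 / s2) = K^-1 * (u1^-1 / K / s2) by rewrite !mulrA.
rewrite mulrDr g1 mulrA f3 -(mulrA _ u1) -exprS eu0 es1 mulrDr mulr1 mulrA e2.
rewrite inv21 mulrDr mulr1 (exprS u1 3) !mulrA mulrVK //.
by addr_perm.
Qed.

End ConservedQuantity.

Section SkewRecurrence.
Variables (D : unitRingType) (K : D) (u s : nat -> D).
Hypotheses (hK : K \is a GRing.unit) (hu : forall n, u n \is a GRing.unit)
  (hs : forall n, s n \is a GRing.unit).
Hypotheses (rec_u : forall n, u n.+1 * K * u n = 1 + s n.+1)
  (rec_s : forall n, s n.+2 * K * s n.+1 = 1 + u n.+1 ^+ 4)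
  (comm_s1u0 : s 1 * K * u 0 = u 0 * s 1).

Lemma skew_comm_su n :
  s n.+1 * K * u n = u n * s n.+1 /\ u n.+1 * K * s n.+1 = s n.+1 * u n.+1.
Proof.
have comm_us m : s m.+1 * K * u m = u m * s m.+1 ->
    u m.+1 * K * s m.+1 = s m.+1 * u m.+1.
  move=> comm; apply: (skew_comm_shift (hu m) hK comm (rec_u m)).
  by rewrite mulrDl mulrDr mul1r mulr1.
elim: n => [|n [_ IH]]; first by split; last exact: comm_us.
have comm_su : s n.+2 * K * u n.+1 = u n.+1 * s n.+2.
  apply: (skew_comm_shift (hs n.+1) hK IH (rec_s n)).
  by rewrite mulrDl mulrDr mul1r mulr1 -exprSr exprS.
by split; last exact: comm_us.
Qed.

Definition phi n := u n.+1 ^+ 2 / s n.+1 + (s n.+1)^-1 * u n ^+ 2.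

Lemma phi_left n : u n.+1 * phi n = u n.+2 * K + u n.
Proof.
have [_ comm] := skew_comm_su n.
exact: conserved_left (rec_u n) (rec_s n) (rec_u n.+1) comm.
Qed.

Lemma phi_right n : u n.+1 * phi n.+1 = u n.+2 * K + u n.
Proof.
have [comm21 comm22] := skew_comm_su n.+1.
exact: conserved_right (rec_u n) (rec_s n) (rec_u n.+1) comm22 comm21.
Qed.

Lemma phi_const n : phi n = phi 0.
Proof.
elim: n => [|n IH] //; rewrite -IH.
by apply: (mulrI (hu n.+1)); rewrite phi_right phi_left.
Qed.

Lemma linear_rec_u n : u n.+2 * K = u n.+1 * phi 0 - u n.
Proof. by rewrite -(phi_const n) phi_left addrK. Qed.

End SkewRecurrence.

Section PathSums.
Variables (D : unitRingType) (x y : D).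

Definition motzkin1_to (n : nat) (e : bool) : D :=
  \sum_(h : {ffun 'I_n.+1 -> bool} | ~~ h ord0 && (h ord_max == e)) path_weight x y h.

Lemma motzkin1_sumE n : motzkin1_sum x y n = motzkin1_to n false.
Proof. by apply: eq_bigl => h; rewrite /motzkin1 eqbF_neg. Qed.

Lemma motzkin1_to0 e : motzkin1_to 0 e = (~~ e)%:R.
Proof.
have max0 : ord_max = ord0 :> 'I_1 by apply: val_inj.
rewrite /motzkin1_to max0; case: e.
  by rewrite big_pred0 // => h; case: (h ord0).
rewrite (big_pred1 [ffun=> false]) /path_weight ?big_ord0 // => h /=.
apply/idP/eqP => [/andP [/negbTE h0 _] | -> ]; last by rewrite ffunE.
by apply/ffunP => i; rewrite ffunE (ord1 i).
Qed.

Section Snoc.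
Variable n : nat.

Definition path_snoc (p : {ffun 'I_n.+1 -> bool} * bool) : {ffun 'I_n.+2 -> bool} :=
  [ffun i : 'I_n.+2 => if (i < n.+1)%N then p.1 (inord i) else p.2].

Definition path_unsnoc (h : {ffun 'I_n.+2 -> bool}) : {ffun 'I_n.+1 -> bool} * bool :=
  ([ffun i : 'I_n.+1 => h (inord i)], h ord_max).

Lemma path_snoc_lt p (i : nat) : (i < n.+1)%N -> path_snoc p (inord i) = p.1 (inord i).
Proof. by move=> hi; rewrite ffunE inordK ?hi // ltnS ltnW. Qed.

Lemma path_snoc_max p : path_snoc p ord_max = p.2.
Proof. by rewrite ffunE /= ltnn. Qed.

Lemma path_snoc0 p : path_snoc p ord0 = p.1 ord0.
Proof. by rewrite ffunE /=; congr (p.1 _); apply: val_inj; rewrite /= inordK. Qed.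

Lemma path_snocK : cancel path_snoc path_unsnoc.
Proof.
case=> h b; rewrite /path_unsnoc path_snoc_max; congr (_, _).
by apply/ffunP => i; rewrite ffunE path_snoc_lt // inord_val.
Qed.

Lemma path_unsnocK : cancel path_unsnoc path_snoc.
Proof.
move=> h; apply/ffunP => i; rewrite ffunE /=; case: ifP => hi.
  by rewrite ffunE; congr (h _); apply: val_inj; rewrite /= inordK // inordK.
congr (h _); apply: val_inj => /=.
by move: (ltn_ord i) hi; rewrite ltnS leq_eqVlt => /orP [/eqP -> | ->].
Qed.

Lemma path_weight_snoc p :
  path_weight x y (path_snoc p) =
  path_weight x y p.1 * step_weight x y (p.1 ord_max) p.2.
Proof.
rewrite /path_weight big_ord_recr /=.
have max_n : inord n = ord_max :> 'I_n.+1 by apply: val_inj; rewrite /= inordK.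
have max_n1 : inord n.+1 = ord_max :> 'I_n.+2 by apply: val_inj; rewrite /= inordK.
rewrite path_snoc_lt // max_n1 path_snoc_max max_n; congr (_ * _).
apply: eq_bigr => i _; rewrite !path_snoc_lt // ltnS ?ltn_ord //.
exact: ltnW.
Qed.

End Snoc.

Lemma motzkin1_toS n e :
  motzkin1_to n.+1 e =
  motzkin1_to n false * step_weight x y false e + motzkin1_to n true * step_weight x y true e.
Proof.
rewrite /motzkin1_to (reindex (@path_snoc n)) /=; last first.
  by apply: onW_bij; exists (@path_unsnoc n); [apply: path_snocK | apply: path_unsnocK].
under eq_bigl do rewrite path_snoc0 path_snoc_max.
under eq_bigr do rewrite path_weight_snoc.
rewrite -(pair_big (fun h : {ffun 'I_n.+1 -> bool} => ~~ h ord0) (fun b => b == e)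
  (fun h b => path_weight x y h * step_weight x y (h ord_max) b)) /=.
under eq_bigr do rewrite big_pred1_eq.
rewrite (bigID (fun h : {ffun 'I_n.+1 -> bool} => h ord_max)) /= addrC !mulr_suml.
congr (_ + _); apply: eq_big => h.
- by case: (h ord_max); rewrite ?andbT ?andbF.
- by move=> /andP [_ /negbTE ->].
- by case: (h ord_max); rewrite ?andbT ?andbF.
- by move=> /andP [_ ->].
Qed.

End PathSums.

Lemma sandwich_identity (D : ringType) (a b z w : D) :
  a * b = 1 -> b * a = 1 -> z * w = w + 1 -> w * z = w + 1 ->
  (a + z * b * z) * w * (b * z + a) = (a + z * b) * w * (a + z * b * z).
Proof.
move=> ab ba zw wz.
have zbzw : z * b * z * w = z * b * w * z by rewrite -!mulrA zw wz.
have awzbz : a * w * z * b * z = a * w * b * z + z.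
  by rewrite -(mulrA a) wz mulrDr mulr1 !mulrDl ab mul1r.
have zbwza : z * b * w * z * a = z * b * w * a + z.
  by rewrite -(mulrA _ w) wz mulrDr mulr1 mulrDl -(mulrA z b a) ba mulr1.
rewrite mulrDr !mulrDl !mulrDr !mulrA zbzw awzbz zbwza.
by addr_perm.
Qed.

Section WeightIdentities.
Variables (D : unitRingType) (x y : D).
Hypotheses (hx : x \is a GRing.unit) (hy : y \is a GRing.unit).

(* r0 = R_0, r2 = R_2, and phi0 is Phi_0 evaluated with s_1 = R_1 = y. *)
Local Notation C := (commC x y).
Local Notation r0 := (y * x / y).
Local Notation r2 := ((1 + y) / x).
Local Notation phi0 := (r2 ^+ 2 / y + y^-1 * r0 ^+ 2).

Lemma commC_unit : C \is a GRing.unit.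
Proof. by rewrite /commC !unitrMl ?unitrV. Qed.

Lemma yx_unit : y * x \is a GRing.unit.
Proof. by rewrite unitrMl. Qed.

Lemma commC_r0 : C * r0 = x.
Proof. by rewrite /commC !mulrA mulrVK // mulrVK // mulrK. Qed.

Lemma commC_yx : C * (y * x) = x * y.
Proof. by rewrite /commC !mulrA mulrVK // mulrVK. Qed.

Lemma wy1_r0 : wy1 x y * r0 = r2.
Proof. by rewrite /wy1 !mulrA mulrVK // mulrVK // mulrK. Qed.

Lemma phi0_yx : phi0 * (y * x) = r2 * (1 + y) + x * x * x.
Proof. by rewrite !expr2 mulrDl !mulrA !mulrVK // mulVr // mul1r. Qed.

Lemma mulr_yK (P : D) : P / y * (1 + y) * y = P * (1 + y).
Proof.
have comm : y^-1 * (1 + y) = (1 + y) / y.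
  by rewrite mulrDr mulrDl mulr1 mul1r mulVr // mulrV.
by rewrite -(mulrA P) comm mulrA mulrVK.
Qed.

Lemma mulr_r2 (P : D) : P * (r2 * (1 + y)) = P / x * (1 + y) + P * y / x * (1 + y).
Proof. by rewrite !mulrA (mulrDr P 1 y) mulr1 mulrDl mulrDl. Qed.

Lemma transfer_low : r2 * phi0 - r0 = (wy1 x y * r2 + wy2 x y * r0) * C.
Proof.
apply: (mulIr yx_unit).
rewrite -(mulrA _ C) commC_yx mulrBl -(mulrA _ _ (y * x)) phi0_yx.
have e0 : r0 * (y * x) = y * x * x by rewrite mulrA mulrVK.
have eA : wy1 x y * r2 * (x * y) = r2 * y / x * (1 + y).
  by rewrite /wy1 !mulrA mulrVK // mulr_yK.
have eB : wy2 x y * r0 * (x * y) = x * x + r2 / x * (1 + y).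
  rewrite /wy2 !mulrA mulrVK // mulrVK // mulrK // mulrVK // mulrVK //.
  by rewrite expr2 invrM // !mulrA.
have eX : r2 * (x * x * x) = x * x + y * x * x.
  by rewrite !mulrA mulrVK // mulrDl mulrDl mul1r.
rewrite e0 [RHS]mulrDl eA eB mulrDr mulr_r2 eX !addrA addrK.
by addr_perm.
Qed.

Lemma transfer_high :
  wy2 x y * r0 * phi0 = (wy2 x y * r2 + wy3 x y * wy2 x y * r0) * C.
Proof.
apply: (mulIr yx_unit).
rewrite -(mulrA _ C) commC_yx [RHS]mulrDl -(mulrA _ _ (y * x)) phi0_yx.
set G := x * x + (1 + y) / x / x * (1 + y).
have wy2_r0 : wy2 x y * r0 = G / y / x.
  by rewrite /wy2 !mulrA mulrVK // mulrVK // mulrK // expr2 invrM // !mulrA.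
have eA : wy2 x y * r2 * (x * y) = G / y / x * y / x * (1 + y).
  by rewrite /wy2 !mulrA mulrVK // mulr_yK expr2 invrM // !mulrA.
have eW3 : wy3 x y = (x * x + (1 + y) / x / x) / y.
  by rewrite /wy3 mulrDl (exprSr x 2) mulrK // expr2 !mulrA.
have eC : wy3 x y * wy2 x y * r0 * (x * y) = wy3 x y * G.
  by rewrite -(mulrA (wy3 x y)) wy2_r0 !mulrA mulrVK // mulrVK.
have eX : G / y / x * (x * x * x) = G / y * x * x by rewrite !mulrA mulrVK.
rewrite wy2_r0 eA eC mulrDr mulr_r2 eX eW3.
have xx_inv : x * x * (x^-1 * x^-1) = 1 by rewrite mulrA mulrK // mulrV.
have inv_xx : x^-1 * x^-1 * (x * x) = 1 by rewrite mulrA mulrVK // mulVr.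
have zw : (1 + y) / y = y^-1 + 1 by rewrite mulrDl mul1r mulrV.
have wz : y^-1 * (1 + y) = y^-1 + 1 by rewrite mulrDr mulr1 mulVr.
have := sandwich_identity xx_inv inv_xx zw wz; rewrite !mulrA /G => <-.
by rewrite [_ / y * (_ + x * x)]mulrDr !mulrA; addr_perm.
Qed.

Lemma motzkin1_to_linear_rec (v : nat -> D) :
  v 0 = r0 -> v 1 = r2 -> (forall k, v k.+2 * C = v k.+1 * phi0 - v k) ->
  forall k, v k = motzkin1_to x y k false * r0.
Proof.
move=> v0 v1 rec_v.
pose F k := motzkin1_to x y k false; pose T k := motzkin1_to x y k true.
have F_S k : F k.+1 = F k * wy1 x y + T k * wy2 x y by rewrite /F motzkin1_toS.
have T_S k : T k.+1 = F k + T k * wy3 x y by rewrite /T motzkin1_toS /= mulr1.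
suff inv k : v k = F k * r0 /\ v k.+1 = F k * r2 + T k * (wy2 x y * r0).
  by move=> k; case: (inv k).
elim: k => [|k [vk vk1]].
  by rewrite /F /T !motzkin1_to0 v0 v1 !mul1r mul0r addr0.
have vk1F : v k.+1 = F k.+1 * r0.
  by rewrite vk1 F_S [RHS]mulrDl -(mulrA (F k)) -(mulrA (T k)) wy1_r0.
split=> //; apply: (mulIr commC_unit).
have regroup : (F k * r2 + T k * (wy2 x y * r0)) * phi0 - F k * r0 =
    F k * (r2 * phi0 - r0) + T k * (wy2 x y * r0 * phi0).
  by rewrite mulrBr [in LHS]mulrDl !mulrA addrAC.
rewrite rec_v vk vk1 regroup transfer_low transfer_high F_S T_S.
(* Abstract r0 and r2 so that the expansion does not distribute over 1 + y. *)
set a := r0; set b := r2.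
by rewrite !mulrDl !mulrDr !mulrA; addr_perm.
Qed.

End WeightIdentities.

Theorem theorem4p5 (R : realType) (D : unitAlgType (Cplx R))
  (hD : is_division_ring D) (x y : D)
  (hx : x \is a GRing.unit) (hy : y \is a GRing.unit)
  (Rs : int -> D) (hRs : forall k : int, Rs k != 0)
  (hev : forall n : int,
     Rs (2 * n) * commC x y * Rs (2 * n - 2) = 1 + Rs (2 * n - 1))
  (hodd : forall n : int,
     Rs (2 * n + 1) * commC x y * Rs (2 * n - 1) = 1 + Rs (2 * n) ^+ 4)
  (h0 : Rs 0 = y * x * y^-1) (h1 : Rs 1 = y) :
  forall n : nat, Rs (2 * n%:Z) * (Rs 0)^-1 = motzkin1_sum x y n.
Proof.
pose u n := Rs (2 * n%:Z); pose s n := Rs (2 * n%:Z - 1).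
have hRs_unit k : Rs k \is a GRing.unit by apply: hD.
have rec_u n : u n.+1 * commC x y * u n = 1 + s n.+1.
  by rewrite /u /s -hev; congr (_ * _ * Rs _); lia.
have rec_s n : s n.+2 * commC x y * s n.+1 = 1 + u n.+1 ^+ 4.
  by rewrite /u /s -hodd; congr (Rs _ * _ * _); lia.
have u0 : u 0 = y * x / y by rewrite /u mulr0 h0.
have s1 : s 1 = y by rewrite /s (_ : 2 * 1 - 1 = 1) // h1.
have u1 : u 1 = (1 + y) / x.
  by rewrite -s1 -(rec_u 0) -(mulrA (u 1)) u0 commC_r0 // mulrK.
have comm_s1u0 : s 1 * commC x y * u 0 = u 0 * s 1.
  by rewrite s1 u0 -mulrA commC_r0 // mulrVK.
have rec_phi := @linear_rec_u _ _ u s (commC_unit hx hy) (fun n => hRs_unit _)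
  (fun n => hRs_unit _) rec_u rec_s comm_s1u0.
rewrite /phi u0 u1 s1 in rec_phi.
move=> n; rewrite motzkin1_sumE -/(u n).
by rewrite (motzkin1_to_linear_rec hx hy u0 u1 rec_phi n) h0 mulrK // -h0.
Qed.
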